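(* Let $\mathcal{S}=\{S_1,\dots,S_N\}\subset\mathbb{R}^Q_{\ge0}$ be a finite set of service vectors and suppose the system is overloaded, $\rho\notin\mathcal{P}$. Let $\theta\in\mathbb{R}^Q_{\ge0}$ with $\sum_q\theta_q=1$ be a fairness criterion. Let $X(t)$ be the workload under the MaxWeight policy with some diagonal positive definite matrix $\Delta$, and let $\bar X(t)$ be the workload under some other scheduling algorithm (choosing a service vector from $\mathcal{S}$ in each slot, with the same queue dynamics), such that $$\lim_{t\to\infty}\frac{X(t)}{t}=\eta,\qquad \lim_{t\to\infty}\frac{\bar X(t)}{t}=\bar\eta,$$ and both achieve the fairness criterion: $\frac{\eta_q}{\sum_k\eta_k}=\frac{\bar\eta_q}{\sum_k\bar\eta_k}=\theta_q$ for all $q$. Then $\eta\le\bar\eta$ (componentwise), i.e. $\eta$ is the minimal scaled workload vector achieving the fairness criterion $\theta$.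
   Context: Model: $Q$ queues, discrete time $t=0,1,2,\dots$. Arrivals $A(t)$ with $0\le A_q(t)\le\bar A_q<\infty$ and $\rho_q=\lim_{t\to\infty}\frac1t\sum_{s=0}^{t-1}A_q(s)\in(0,\infty)$. In slot $t$ a service vector $S(t)\in\mathcal{S}$ is used; departures $D_q(t)=\min\{S_q(t),X_q(t)\}$; $X(t+1)=X(t)+A(t)-D(t)$, $X(0)=0$. MaxWeight with matrix $\Delta$ (diagonal, positive diagonal entries): $S(t)\in\arg\max_{S\in\mathcal{S}}\langle S,\Delta X(t)\rangle$. Stability region $\mathcal{P}=\{r\in\mathbb{R}^Q_{\ge0}: r\le\sum_n\alpha_nS_n\text{ for some }\alpha_n\ge0,\ \sum_n\alpha_n=1\}$. *)

From HB Require Import structures.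
From mathcomp Require Import all_boot all_order all_algebra.
From mathcomp Require Import all_classical all_reals all_analysis.
Set Implicit Arguments. Unset Strict Implicit. Unset Printing Implicit Defensive.
Import Order.TTheory GRing.Theory Num.Theory.
Import numFieldNormedType.Exports.
Local Open Scope ring_scope.

Section Queue.
Variables (R : realType) (Q N : nat).

(* Workload X(t) under a schedule sigma : nat -> 'I_N (service vector used
   in slot t), arrivals A:
   X(0)=0, X(t+1) = X(t) + A(t) - D(t), D_q(t) = min(S_q(t), X_q(t)). *)
Fixpoint workload (A : nat -> 'I_Q -> R) (S : 'I_N -> 'I_Q -> R)
  (sigma : nat -> 'I_N) (t : nat) : 'I_Q -> R :=
  match t with
  | 0%N => fun _ => 0
  | t'.+1 => fun q =>
      let X := workload A S sigma t' in
      X q + A t' q - Num.min (S (sigma t') q) (X q)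
  end.

(* <S, Delta X> for Delta = diag(delta). *)
Definition weight (delta : 'I_Q -> R) (s X : 'I_Q -> R) : R :=
  \sum_(q < Q) s q * (delta q * X q).

Definition is_maxweight (A : nat -> 'I_Q -> R) (S : 'I_N -> 'I_Q -> R)
  (delta : 'I_Q -> R) (sigma : nat -> 'I_N) : Prop :=
  forall (t : nat) (n : 'I_N),
    weight delta (S n) (workload A S sigma t) <=
    weight delta (S (sigma t)) (workload A S sigma t).

Definition stab_region (S : 'I_N -> 'I_Q -> R) (r : 'I_Q -> R) : Prop :=
  (forall q, 0 <= r q) /\
  exists alpha : 'I_N -> R,
    (forall n, 0 <= alpha n) /\ \sum_(n < N) alpha n = 1 /\
    forall q, r q <= \sum_(n < N) alpha n * S n q.

End Queue.

(** The drift argument compares both schedules along the MaxWeight fluid limit.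
Put [w_q = delta_q eta_q] and [V(t) = sum_q w_q (Xbar_q(t) - X_q(t))].  Every
queue with [eta_q > 0] grows linearly, so it eventually never empties and
MaxWeight serves it at full rate; since [X(t)/t -> eta], the MaxWeight choice
eventually maximises [<S, Delta eta>] up to any [e > 0].  Hence the increments
of [V] are eventually at least [-e], so [lim V(t)/t = <etabar - eta, Delta eta>]
is nonnegative.  Both limits are multiples [a theta] and [b theta] of [theta],
and [<(b - a) theta, Delta a theta> >= 0] with [a > 0] forces [a <= b]. *)

From HB Require Import structures.
From mathcomp Require Import all_boot all_order all_algebra.
From mathcomp Require Import all_classical all_reals all_analysis.
From mathcomp Require Import ring lra.
Import Order.TTheory GRing.Theory Num.Theory.
Import numFieldNormedType.Exports.
Local Open Scope classical_set_scope.
Local Open Scope ring_scope.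

Section RatioLimits.
Context {R : realType}.
Implicit Types (x V : nat -> R) (c l L : R).

Lemma cvg_ratio_ge0 {x l} :
  (forall t, 0 <= x t) -> (fun t => x t / t%:R) @ \oo --> l -> 0 <= l.
Proof.
move=> x_ge0 xl; apply: (ler_cvg_to (cvg_cst 0) xl).
by apply: nearW => t; rewrite divr_ge0.
Qed.

Lemma cvg_ratio_gt0_near_ge {x l} c :
  (fun t => x t / t%:R) @ \oo --> l -> 0 < l -> \forall t \near \oo, c <= x t.
Proof.
move=> xl l_gt0; have half_lt : l / 2 < l by lra.
near=> t.
have t_gt0 : 0 < (t%:R : R) by rewrite ltr0n; near: t; exact: nbhs_infty_gt.
rewrite -[x t](divfK (lt0r_neq0 t_gt0)).
apply: (@le_trans _ _ (l / 2 * t%:R)).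
  by rewrite -ler_pdivrMl ?divr_gt0 //; near: t; exact: nbhs_infty_ger.
by rewrite ler_pM2r // ltW //; near: t; exact: cvgr_gt xl _ half_lt.
Unshelve. all: end_near.
Qed.

Lemma cvg_inv_natr : (fun t : nat => (t%:R : R)^-1) @ \oo --> 0.
Proof.
apply/(gtr0_cvgV0 (f := fun t : nat => (t%:R : R))); last exact: cvgr_idn.
by near=> t; rewrite ltr0n; near: t; exact: nbhs_infty_gt.
Unshelve. all: end_near.
Qed.

Lemma lim_ratio_ge_increment {V c L} :
  (\forall t \near \oo, V t + c <= V t.+1) ->
  (fun t => V t / t%:R) @ \oo --> L -> c <= L.
Proof.
case=> T _ incr VL.
have grow k : V T + k%:R * c <= V (T + k)%N.
  elim: k => [|k IH]; first by rewrite addn0 mul0r addr0.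
  have := incr (T + k)%N (leq_addr _ _); rewrite addnS -natr1 mulrDl mul1r.
  lra.
have lowL : (fun t => c + (V T - T%:R * c) * t%:R^-1) @ \oo --> c.
  rewrite -[X in _ --> X]addr0 -(mulr0 (V T - T%:R * c)).
  by apply: cvgD; [exact: cvg_cst | apply: cvgM; [exact: cvg_cst | exact: cvg_inv_natr]].
apply: (ler_cvg_to lowL VL); near=> t.
have tT : (T <= t)%N by near: t; exact: nbhs_infty_ge.
have t_gt0 : 0 < (t%:R : R) by rewrite ltr0n; near: t; exact: nbhs_infty_gt.
rewrite ler_pdivlMr // mulrDl -mulrA mulVf ?gt_eqF // mulr1.
have := grow (t - T)%N; rewrite subnKC // natrB //; lra.
Unshelve. all: end_near.
Qed.

End RatioLimits.

Lemma cvg_weight {R : realType} {Q : nat} {T : Type} {F : set_system T} {FF : Filter F}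
    {delta : 'I_Q -> R} {s_ x_ : T -> 'I_Q -> R} {s x : 'I_Q -> R} :
  (forall q, (fun t => s_ t q) @ F --> s q) ->
  (forall q, (fun t => x_ t q) @ F --> x q) ->
  (fun t => weight delta (s_ t) (x_ t)) @ F --> weight delta s x.
Proof.
move=> ss xx; apply: cvg_big => [|q _]; first exact: add_continuous.
exact: cvgM (ss q) (cvgM (cvg_cst _) (xx q)).
Qed.

Lemma weight_divr {R : realType} {Q : nat} (delta s x : 'I_Q -> R) (c : R) :
  weight delta s (fun q => x q / c) = weight delta s x / c.
Proof. by rewrite /weight mulr_suml; apply: eq_bigr => q _; rewrite !mulrA. Qed.

Lemma workload_ge0 {R : realType} {Q N : nat} {A : nat -> 'I_Q -> R}
    (S : 'I_N -> 'I_Q -> R) (sigma : nat -> 'I_N) :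
  (forall t q, 0 <= A t q) -> forall t q, 0 <= workload A S sigma t q.
Proof.
move=> A_ge0; elim=> [|t IH] q //=.
have min_le : Num.min (S (sigma t) q) (workload A S sigma t q) <= workload A S sigma t q.
  by rewrite ge_min lexx orbT.
have := A_ge0 t q; have := IH q; lra.
Qed.

Section MaxWeightDrift.
Context {R : realType} {Q N : nat} {A : nat -> 'I_Q -> R} {S : 'I_N -> 'I_Q -> R}.
Context {delta : 'I_Q -> R} {sigma sigmabar : nat -> 'I_N} {eta etabar : 'I_Q -> R}.
Hypothesis A_ge0 : forall t q, 0 <= A t q.
Hypothesis delta_gt0 : forall q, 0 < delta q.
Hypothesis maxweight : is_maxweight A S delta sigma.
Hypothesis X_cvg : forall q, (fun t => workload A S sigma t q / t%:R) @ \oo --> eta q.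
Hypothesis Xbar_cvg : forall q, (fun t => workload A S sigmabar t q / t%:R) @ \oo --> etabar q.

Local Notation X := (workload A S sigma).
Local Notation Xbar := (workload A S sigmabar).

Lemma eta_ge0 q : 0 <= eta q.
Proof. exact: cvg_ratio_ge0 (fun t => workload_ge0 S sigma A_ge0 t q) (X_cvg q). Qed.

Lemma maxweight_near_argmax {e} : 0 < e ->
  \forall t \near \oo, forall n,
    weight delta (S n) eta <= weight delta (S (sigma t)) eta + e.
Proof.
move=> e_gt0; have e2_gt0 : 0 < e / 2 by lra.
have close : \forall t \near \oo, forall n,
    `|weight delta (S n) eta - weight delta (S n) (fun q => X t q / t%:R)| < e / 2.
  apply: filter_forall => n; apply: (cvgrPdist_lt _ _).1 _ _ e2_gt0.
  exact: cvg_weight (fun q => cvg_cst _) X_cvg.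
apply: filterS close => t close n.
have mw : weight delta (S n) (fun q => X t q / t%:R) <=
          weight delta (S (sigma t)) (fun q => X t q / t%:R).
  by rewrite !weight_divr ler_wpM2r ?invr_ge0 ?ler0n //; exact: maxweight.
move: (close n) (close (sigma t)); rewrite !ltr_norml => /andP[? ?] /andP[? ?].
lra.
Qed.

Lemma workload_near_saturated :
  \forall t \near \oo, forall q, 0 < eta q -> forall n, S n q <= X t q.
Proof.
apply: filter_forall => q; have [eta_gt0|eta_le0] := ltP 0 (eta q); last first.
  exact: nearW.
have saturated : \forall t \near \oo, forall n, S n q <= X t q.
  by apply: filter_forall => n; exact: cvg_ratio_gt0_near_ge (X_cvg q) eta_gt0.
by apply: filterS saturated => t.
Qed.

Lemma weight_min_saturated t :
  (forall q, 0 < eta q -> S (sigma t) q <= X t q) ->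
  weight delta (fun q => Num.min (S (sigma t) q) (X t q)) eta =
  weight delta (S (sigma t)) eta.
Proof.
move=> saturated; apply: eq_bigr => q _.
have [/saturated/min_l -> //|eta_le0] := ltP 0 (eta q).
have -> : eta q = 0 by apply/eqP; rewrite eq_le eta_le0 eta_ge0.
by rewrite !mulr0.
Qed.

Let V t := weight delta (fun q => Xbar t q - X t q) eta.

Lemma V_increment t :
  V t + (weight delta (fun q => Num.min (S (sigma t) q) (X t q)) eta
         - weight delta (S (sigmabar t)) eta) <= V t.+1.
Proof.
rewrite /V /weight -sumrB -big_split; apply: ler_sum => q _ /=.
rewrite -!mulrBl -mulrDl; apply: ler_wpM2r; first by rewrite mulr_ge0 ?eta_ge0 ?ltW.
have : Num.min (S (sigmabar t) q) (Xbar t q) <= S (sigmabar t) q by rewrite ge_min lexx.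
lra.
Qed.

Lemma V_near_increment {e} : 0 < e -> \forall t \near \oo, V t - e <= V t.+1.
Proof.
move=> e_gt0; near=> t.
have argmax : forall n, weight delta (S n) eta <= weight delta (S (sigma t)) eta + e.
  by near: t; exact: maxweight_near_argmax.
have saturated : forall q, 0 < eta q -> forall n, S n q <= X t q.
  by near: t; exact: workload_near_saturated.
have := V_increment t; rewrite weight_min_saturated => [|q /saturated]; last exact.
have := argmax (sigmabar t); lra.
Unshelve. all: end_near.
Qed.

Lemma maxweight_drift_ge0 : 0 <= weight delta (fun q => etabar q - eta q) eta.
Proof.
have VL : (fun t => V t / t%:R) @ \oo --> weight delta (fun q => etabar q - eta q) eta.
  have -> : (fun t => V t / t%:R) =
      fun t => weight delta (fun q => Xbar t q / t%:R - X t q / t%:R) eta.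
    by apply/funext => t; rewrite /V /weight mulr_suml;
       apply: eq_bigr => q _; rewrite mulrAC mulrBl.
  exact: cvg_weight (fun q => cvgB (Xbar_cvg q) (X_cvg q)) (fun q => cvg_cst _).
apply/ler_addgt0Pr => e e_gt0.
have := lim_ratio_ge_increment (V_near_increment e_gt0) VL; lra.
Qed.

End MaxWeightDrift.

Section FairShares.
Context {R : realFieldType} {Q : nat}.
Implicit Types (theta v delta : 'I_Q -> R).

Lemma fair_share_sum_neq0 {theta v} : \sum_(q < Q) theta q != 0 ->
  (forall q, v q / \sum_(k < Q) v k = theta q) -> \sum_(k < Q) v k != 0.
Proof.
move=> theta_neq0 fair; apply: contra_neq theta_neq0 => v0.
by apply: big1 => q _; rewrite -fair v0 invr0 mulr0.
Qed.

Lemma fair_shareE {theta v} : \sum_(q < Q) theta q != 0 ->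
  (forall q, v q / \sum_(k < Q) v k = theta q) ->
  forall q, v q = theta q * \sum_(k < Q) v k.
Proof.
move=> theta_neq0 fair q.
by rewrite -fair divfK // (fair_share_sum_neq0 theta_neq0 fair).
Qed.

Lemma weighted_sqr_sum_gt0 {delta theta} : (forall q, 0 < delta q) ->
  \sum_(q < Q) theta q != 0 -> 0 < \sum_(q < Q) delta q * theta q ^+ 2.
Proof.
move=> delta_gt0 theta_neq0.
have terms_ge0 q : true -> 0 <= delta q * theta q ^+ 2.
  by rewrite mulr_ge0 ?sqr_ge0 ?ltW.
rewrite lt_def sumr_ge0 // andbT; apply: contra_neq theta_neq0 => /(psumr_eq0P terms_ge0).
move=> terms0; apply: big1 => q _; have /eqP := terms0 q isT.
by rewrite mulf_eq0 (gt_eqF (delta_gt0 q)) sqrf_eq0 => /eqP.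
Qed.

End FairShares.

Theorem theorem2 (R : realType) (Q N : nat)
  (S : 'I_N -> 'I_Q -> R)
  (A : nat -> 'I_Q -> R) (Abar rho : 'I_Q -> R)
  (theta delta : 'I_Q -> R)
  (sigma sigmabar : nat -> 'I_N)
  (eta etabar : 'I_Q -> R) :
  (forall n q, 0 <= S n q) ->
  (forall t q, 0 <= A t q /\ A t q <= Abar q) ->
  (forall q, (fun t : nat => (t%:R)^-1 * \sum_(s < t) A s q) @ \oo --> rho q) ->
  (forall q, 0 < rho q) ->
  ~ stab_region S rho ->
  (forall q, 0 <= theta q) -> \sum_(q < Q) theta q = 1 ->
  (forall q, 0 < delta q) ->
  is_maxweight A S delta sigma ->
  (forall q, (fun t : nat => workload A S sigma t q / t%:R) @ \oo --> eta q) ->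
  (forall q, (fun t : nat => workload A S sigmabar t q / t%:R) @ \oo --> etabar q) ->
  (forall q, eta q / (\sum_(k < Q) eta k) = theta q) ->
  (forall q, etabar q / (\sum_(k < Q) etabar k) = theta q) ->
  forall q, eta q <= etabar q.
Proof.
move=> _ A_bounded _ _ _ theta_ge0 theta_sum delta_gt0 maxweight X_cvg Xbar_cvg fair fairbar q.
have A_ge0 t k : 0 <= A t k by case: (A_bounded t k).
have theta_neq0 : \sum_(k < Q) theta k != 0 by rewrite theta_sum oner_neq0.
have drift := maxweight_drift_ge0 A_ge0 delta_gt0 maxweight X_cvg Xbar_cvg.
have etaE := fair_shareE theta_neq0 fair.
have etabarE := fair_shareE theta_neq0 fairbar.
set a := \sum_(k < Q) eta k in fair etaE.
set b := \sum_(k < Q) etabar k in etabarE.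
have a_gt0 : 0 < a.
  rewrite lt_def (fair_share_sum_neq0 theta_neq0 fair) sumr_ge0 // => k _.
  exact: eta_ge0 A_ge0 X_cvg k.
have driftE : weight delta (fun k => etabar k - eta k) eta =
              (b - a) * (a * \sum_(k < Q) delta k * theta k ^+ 2).
  by rewrite /weight !mulr_sumr; apply: eq_bigr => k _; rewrite etaE etabarE; ring.
move: drift; rewrite driftE pmulr_lge0 ?mulr_gt0 ?weighted_sqr_sum_gt0 // subr_ge0.
by move=> le_ab; rewrite etaE etabarE ler_wpM2l.
Qed.
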